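(* Let $G=\langle a,b\mid a^n=1,\ b^t=a^k,\ b^{-1}ab=a^r\rangle$ with natural numbers $n,t,k,r$ satisfying $r^t\equiv1\pmod n$ and $k(r-1)\equiv0\pmod n$. Then the subgroups $H_{v,i,c}$, $(v,i,c)\in\mathfrak{N}$, are exactly all the normal subgroups of $G$, and they are pairwise distinct (distinct triples give distinct subgroups).
   Context: For a divisor $v$ of $n$, $o_v$ is the multiplicative order of $r$ modulo $v$. For integers $v,i,c$, $H_{v,i,c}=\langle a^v,a^ib^c\rangle$. $\mathfrak{N}=\{(v,i,c)\in\mathbb{Z}^3: v>0,\ v\mid n,\ c>0,\ c\mid t,\ 0\le i\le v-1,\ v\mid k+i\tfrac tc,\ o_v\mid c,\ v\mid i(r-1)\}$. *)

From mathcomp Require Import all_boot all_algebra all_fingroup.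
Set Implicit Arguments. Unset Strict Implicit. Unset Printing Implicit Defensive.
Import GRing.Theory.
Local Open Scope group_scope.

(* Multiplicative order of r modulo v (v > 0): least m >= 1 with r^m = 1 mod v.
   (Searched among 1..v, which suffices when r is coprime to v.) *)
Definition mord (v r : nat) : nat :=
  (find (fun m => r ^ m.+1 == 1 %[mod v]) (iota 0 v)).+1.

(* (G, a, b) is the group <a, b | a^n = 1, b^t = a^k, b^-1 a b = a^r>:
   a, b generate G, satisfy the relations, and G has the universal property
   w.r.t. every (finite) group with a pair of elements satisfying them. *)
Definition metacyc_pres (n t k r : nat) (gT : finGroupType) (G : {group gT})
  (a b : gT) : Prop :=
  [/\ <<[set a; b]>>%g = G, (a ^+ n = 1)%g, (b ^+ t = a ^+ k)%g,
      (a ^ b = a ^+ r)%g &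
      forall (rT : finGroupType) (x y : rT),
        (x ^+ n = 1)%g -> (y ^+ t = x ^+ k)%g -> (x ^ y = x ^+ r)%g ->
        exists f : {morphism G >-> rT}, f a = x /\ f b = y].

Definition Hvic (gT : finGroupType) (a b : gT) (v i c : nat) : {group gT} :=
  <<[set a ^+ v; (a ^+ i * b ^+ c)%g]>>%G.

Definition inN (n t k r v i c : nat) : Prop :=
  [/\ [/\ 0 < v, v %| n, 0 < c, c %| t & i < v],
      v %| k + i * (t %/ c),
      mord v r %| c &
      ((v%:Z) %| ((i%:Z * (r%:Z - 1))%R))%Z ].

From mathcomp Require Import all_boot all_algebra all_fingroup all_solvable.
From mathcomp Require Import ring zify.
Set Implicit Arguments. Unset Strict Implicit. Unset Printing Implicit Defensive.

(* Every element of G is b^j a^x, and a permutation model of the presentation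
   shows that #[a] = n and that the exponent j is determined modulo t.
   Given a normal subgroup H, take v least with a^v in H, c least with b^c in
   H<a>, and an element a^i b^c of H with i < v. Conjugating a^i b^c by a^-1,
   by b, and raising it to the power t/c produce elements of H of the form
   a^e, and the conditions v | e are exactly the conditions defining
   \mathfrak{N}; then H = <a^v, a^i b^c>. Conversely these conditions make
   H_{v,i,c} normal, and (v, i, c) is recovered from H_{v,i,c}: its meet with
   <a> is <a^v>, c divides every b-exponent occurring in it, and i is then
   unique modulo v. *)

Lemma dvdz_mul_subr1 v i r :
  ((v%:Z) %| ((i%:Z * (r%:Z - 1))%R))%Z = (i * r == i %[mod v]).
Proof.
by rewrite GRing.mulrBr GRing.mulr1 -eqz_mod_dvd -PoszM !modz_nat.
Qed.

Lemma leq_totient n : totient n <= n.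
Proof.
rewrite totient_count_coprime -[leqRHS]subn0 -[leqRHS]muln1 -sum_nat_const_nat.
by apply: leq_sum => d _; rewrite leq_b1.
Qed.

Lemma coprime_expn_mod1 v r t : 0 < t -> r ^ t = 1 %[mod v] -> coprime r v.
Proof.
move=> t_gt0 rt; rewrite -(coprime_pexpl _ _ t_gt0) -coprime_modl rt coprime_modl.
exact: coprime1n.
Qed.

Lemma mord_dvdn v r t c : 0 < v -> 0 < t -> r ^ t = 1 %[mod v] ->
  (mord v r %| c) = (r ^ c == 1 %[mod v]).
Proof.
move=> v_gt0 t_gt0 rt; set P := fun m => r ^ m.+1 == 1 %[mod v].
have hasP : has P (iota 0 v).
  have phi_gt0 : 0 < totient v by rewrite totient_gt0.
  apply/hasP; exists (totient v).-1.
    by rewrite mem_iota add0n prednK ?leq_totient.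
  by rewrite /P prednK // Euler_exp_totient // (coprime_expn_mod1 t_gt0 rt).
rewrite /mord -/P; set d := find P (iota 0 v).
have d_lt_v : d < v by rewrite -[v](size_iota 0) -has_find.
have rd : r ^ d.+1 = 1 %[mod v].
  by apply/eqP; have := nth_find 0 hasP; rewrite nth_iota.
have rdq q : r ^ (d.+1 * q) = 1 %[mod v].
  by rewrite expnM -modnXm rd modnXm exp1n.
apply/idP/eqP => [/dvdnP[q ->]|rc]; first by rewrite mulnC rdq.
rewrite /dvdn; apply/negPn/negP; rewrite -lt0n => cd_gt0.
have cd_lt : c %% d.+1 < d.+1 by rewrite ltn_pmod.
have := @before_find _ 0 P (iota 0 v) (c %% d.+1).-1.
rewrite -ltnS prednK // => /(_ cd_lt).
rewrite nth_iota ?add0n; last by move: cd_lt d_lt_v; lia.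
rewrite /P prednK // => /negP; apply; apply/eqP.
by move: rc; rewrite {1}(divn_eq c d.+1) expnD (mulnC (c %/ d.+1)) -modnMml rdq modnMml mul1n.
Qed.

Section PermutationModel.

Variables n t k r : nat.
Hypotheses (n_gt0 : 0 < n) (t_gt0 : 0 < t).
Hypotheses (rt : r ^ t = 1 %[mod n]) (kr : k * r = k %[mod n]).

Definition mpt (j z : nat) : 'I_t * 'I_n :=
  (Ordinal (ltn_pmod j t_gt0), Ordinal (ltn_pmod z n_gt0)).

Lemma mpt_mod j z j' z' : j = j' %[mod t] -> z = z' %[mod n] -> mpt j z = mpt j' z'.
Proof. by move=> ej ez; congr pair; apply: val_inj. Qed.

Lemma mptE (p : 'I_t * 'I_n) : p = mpt p.1 p.2.
Proof. by case: p => j z; congr pair; apply: val_inj; rewrite /= modn_small. Qed.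

Lemma mpt_inj j z j' z' : mpt j z = mpt j' z' -> j = j' %[mod t] /\ z = z' %[mod n].
Proof. by case. Qed.

Lemma muln_rXt x : x * r ^ t = x %[mod n].
Proof. by rewrite -modnMmr rt modnMmr muln1. Qed.

(* (j, z) stands for b^j a^z; stepY is right multiplication by b, the carry
   term accounting for b^t = a^k. *)
Definition stepX (p : 'I_t * 'I_n) := mpt p.1 (p.2 + 1).
Definition stepY (p : 'I_t * 'I_n) := mpt (p.1 + 1) (p.2 * r + k * ((p.1 + 1) %/ t)).

Lemma stepX_inj : injective stepX.
Proof.
move=> p q /mpt_inj[/eqP ej /eqP ez]; rewrite (mptE p) (mptE q).
by apply: mpt_mod; apply/eqP; rewrite // -(eqn_modDr 1).
Qed.

Lemma stepY_inj : injective stepY.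
Proof.
move=> p q /mpt_inj[/eqP + /eqP].
rewrite eqn_modDr !(modn_small (ltn_ord _)) => /eqP/val_inj ej.
rewrite ej eqn_modDr => /eqP ez; rewrite (mptE p) (mptE q) ej; apply: mpt_mod => //.
have ezt : p.2 * r ^ t = q.2 * r ^ t %[mod n].
  by rewrite -[t in r ^ t](prednK t_gt0) expnS !mulnA -modnMml ez modnMml.
by rewrite -muln_rXt ezt muln_rXt.
Qed.

Definition mX := perm stepX_inj.
Definition mY := perm stepY_inj.

Lemma mX_mpt j z m : (mX ^+ m)%g (mpt j z) = mpt j (z + m).
Proof.
rewrite permX; elim: m => [|m IHm]; first by rewrite addn0.
rewrite iterS IHm permE /stepX; apply: mpt_mod => /=; first exact: modn_mod.
by rewrite modnDml addn1 addnS.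
Qed.

Lemma mY_mpt j z m :
  (mY ^+ m)%g (mpt j z) = mpt (j + m) (z * r ^ m + k * ((j %% t + m) %/ t)).
Proof.
rewrite permX; elim: m => [|m IHm].
  by rewrite /= !addn0 expn0 muln1 divn_small ?ltn_pmod // muln0 addn0.
rewrite iterS IHm permE /stepY; apply: mpt_mod => /=.
  by rewrite modnDml addn1 addnS.
set J := j %% t + m.
have -> : (j + m) %% t = J %% t by rewrite modnDml.
have -> : j %% t + m.+1 = J %/ t * t + (J %% t + 1) by rewrite addnA -divn_eq addn1 addnS.
rewrite divnMDl // -modnDml modnMml modnDml mulnDl -mulnA -expnSr mulnDr addnA.
rewrite -modnDml -[in RHS]modnDml; congr ((_ + _) %% n).
by rewrite -modnDmr -[in RHS]modnDmr mulnAC -modnMml kr modnMml.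
Qed.

Lemma mX_order : (mX ^+ n = 1)%g.
Proof.
apply/permP => p; rewrite perm1 (mptE p) mX_mpt.
by apply: mpt_mod; rewrite ?modnDr.
Qed.

Lemma mY_order : (mY ^+ t = mX ^+ k)%g.
Proof.
apply/permP => p; rewrite (mptE p) mX_mpt mY_mpt; apply: mpt_mod; first by rewrite modnDr.
rewrite divnDr ?dvdnn // divnn t_gt0 divn_small ?ltn_pmod // add0n muln1.
by rewrite -modnDml muln_rXt modnDml.
Qed.

Lemma mX_conj : (mX ^ mY = mX ^+ r)%g.
Proof.
suff mXY : (mX * mY = mY * mX ^+ r)%g by rewrite conjgE mXY mulKg.
apply/permP => p; rewrite (mptE p) !permM -{1}(expg1 mX) -(expg1 mY) mX_mpt !mY_mpt mX_mpt.
by apply: mpt_mod => //; rewrite !expn1 mulnDl mul1n addnAC.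
Qed.

Lemma mX_fix m : (mX ^+ m)%g (mpt 0 0) = mpt 0 0 -> n %| m.
Proof. by rewrite mX_mpt => /mpt_inj[_ /eqP]; rewrite add0n mod0n. Qed.

Lemma mY_proj j z : val (((mY ^+ j * mX ^+ z)%g (mpt 0 0)).1) = j %% t.
Proof. by rewrite permM mY_mpt mX_mpt /= add0n. Qed.

End PermutationModel.

Local Open Scope group_scope.

Section Presentation.

Variables (n t k r : nat) (gT : finGroupType) (G : {group gT}) (a b : gT).
Hypotheses (n_gt0 : 0 < n) (t_gt0 : 0 < t).
Hypotheses (rt : r ^ t = 1 %[mod n]) (kr : k * r = k %[mod n]).
Hypothesis presG : metacyc_pres n t k r G a b.

Let aG : a \in G.
Proof. by case: presG => <- *; rewrite mem_gen ?setU11. Qed.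

Let bG : b \in G.
Proof. by case: presG => <- *; rewrite mem_gen // !inE eqxx orbT. Qed.

Let model_morphism :
  exists f : {morphism G >-> {perm 'I_t * 'I_n}}, f a = mX n_gt0 t_gt0 /\
    f b = mY k n_gt0 t_gt0 rt.
Proof.
case: presG => _ _ _ _; apply; [exact: mX_order | exact: mY_order | exact: mX_conj].
Qed.

Lemma metacyc_pres_order : #[a] = n.
Proof.
have [f [fa _]] := model_morphism; case: presG => _ an _ _ _.
apply/eqP; rewrite eqn_dvd order_dvdn an eqxx; apply: (@mX_fix n t n_gt0 t_gt0).
by rewrite -fa -morphX // expg_order morph1 perm1.
Qed.

Lemma metacyc_pres_expb_mod j x j' x' :
  b ^+ j * a ^+ x = b ^+ j' * a ^+ x' -> j = j' %[mod t].
Proof.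
have [f [fa fb]] := model_morphism.
have fE i z : f (b ^+ i * a ^+ z) = (mY k n_gt0 t_gt0 rt ^+ i * mX n_gt0 t_gt0 ^+ z)%g.
  by rewrite morphM ?groupX // !morphX // fa fb.
move=> /(congr1 (fun g => val ((f g) (mpt n_gt0 t_gt0 0 0)).1)).
by rewrite !fE !mY_proj.
Qed.

End Presentation.

Lemma mem_norm_gen (gT : finGroupType) (A : {set gT}) x :
  {in A, forall y, y ^ x \in <<A>>} -> x \in 'N(<<A>>).
Proof.
move=> AxA; rewrite inE -genJ gen_subG; apply/subsetP => z.
by rewrite mem_conjg => /AxA; rewrite conjgKV.
Qed.

Lemma mem_expg_dvdn (gT : finGroupType) (K : {group gT}) (x : gT) m :
  0 < m -> (x ^+ m \in K) ->
  exists d, [/\ 0 < d, d %| m & forall j, (x ^+ j \in K) = (d %| j)].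
Proof.
move=> m_gt0 xmK; have exP : exists j, (0 < j) && (x ^+ j \in K).
  by exists m; rewrite m_gt0.
case: (ex_minnP exP) => d /andP[d_gt0 xdK] d_min.
suff xjK j : (x ^+ j \in K) = (d %| j) by exists d; rewrite -xjK.
apply/idP/idP => [xjK|/dvdnP[q ->]]; last by rewrite mulnC expgM groupX.
have : (x ^+ (j %% d) \in K).
  by move: xjK; rewrite {1}(divn_eq j d) expgD groupMl // mulnC expgM groupX.
case: (posnP (j %% d)) => [/eqP //|jd_gt0 xjdK].
by have := d_min _ (introT andP (conj jd_gt0 xjdK)); rewrite leqNgt ltn_pmod.
Qed.

Lemma Hvic_expa (gT : finGroupType) (a b : gT) v i c : a ^+ v \in Hvic a b v i c.
Proof. by rewrite mem_gen ?setU11. Qed.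

Lemma Hvic_expab (gT : finGroupType) (a b : gT) v i c :
  a ^+ i * b ^+ c \in Hvic a b v i c.
Proof. by rewrite mem_gen // !inE eqxx orbT. Qed.

Section MetacyclicGroup.

Variables (n t k r : nat) (gT : finGroupType) (G : {group gT}) (a b : gT).
Hypotheses (n_gt0 : 0 < n) (t_gt0 : 0 < t) (rt : (r ^ t = 1 %[mod n])%N).
Hypotheses (genG : <<[set a; b]>> = G) (bt : b ^+ t = a ^+ k) (ab : a ^ b = a ^+ r).
Hypothesis order_a : #[a] = n.
Hypothesis expb_mod :
  forall j x j' x', b ^+ j * a ^+ x = b ^+ j' * a ^+ x' -> (j = j' %[mod t])%N.

Let aG : a \in G. Proof. by rewrite -genG mem_gen ?setU11. Qed.
Let bG : b \in G. Proof. by rewrite -genG mem_gen // !inE eqxx orbT. Qed.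

Lemma normal_gen2 (H : {group gT}) :
  H \subset G -> a \in 'N(H) -> b \in 'N(H) -> H <| G.
Proof.
by move=> sHG aN bN; rewrite /normal sHG -genG gen_subG subUset !sub1set aN bN.
Qed.

Lemma conjg_expb c : a ^ (b ^+ c) = a ^+ (r ^ c).
Proof.
elim: c => [|c IHc]; first by rewrite conjg1 expg1.
by rewrite expgSr conjgM IHc conjXg ab -expgM -expnS.
Qed.

Lemma expa_expb x c : a ^+ x * b ^+ c = b ^+ c * a ^+ (x * r ^ c).
Proof. by rewrite conjgC conjXg conjg_expb -expgM mulnC. Qed.

Lemma cycle_expa_normal v : <[a ^+ v]> <| G.
Proof.
apply: normal_gen2; first by rewrite cycle_subG groupX.
  by rewrite -cycle_subG norms_cycle conjXg conjgE mulKg cycle_id.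
by rewrite -cycle_subG norms_cycle conjXg ab -expgM mulnC expgM mem_cycle.
Qed.

Lemma cycle_normal : <[a]> <| G.
Proof. by rewrite -[a]expg1 cycle_expa_normal. Qed.

Lemma mem_expb_expa g : g \in G -> exists j x, g = b ^+ j * a ^+ x.
Proof.
have -> : G :=: <[b]> * <[a]>.
  rewrite -norm_joinEl; first by rewrite joingC -genG joing_idl joing_idr.
  by rewrite cycle_subG (subsetP (normal_norm cycle_normal)).
by case/mulsgP => _ _ /cycleP[j ->] /cycleP[x ->] ->; exists j, x.
Qed.

Lemma mem_cycle_expa v x : (v %| n)%N -> (a ^+ x \in <[a ^+ v]>) = (v %| x)%N.
Proof.
move=> vn; apply/idP/idP => [/cycleP[y /eqP]|/dvdnP[q ->]].
  rewrite -expgM eq_expg_mod_order order_a => /eqP vyx.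
  by rewrite /dvdn -(modn_dvdm x vn) vyx modn_dvdm // modnMr.
by rewrite mulnC expgM mem_cycle.
Qed.

Lemma expa_mulV_mem (K : {group gT}) v x y :
  (v %| n)%N -> (forall j, (a ^+ j \in K) = (v %| j)%N) ->
  (a ^+ x * (a ^+ y)^-1 \in K) = (x == y %[mod v]).
Proof.
move=> vn aK; rewrite -expVgn invg_expg order_a -expgM -expgD aK /dvdn.
by rewrite -(eqn_modDr (n.-1 * y)) -mulSn prednK // (eqP (dvdn_mulr y vn)).
Qed.

Lemma expg_expab i c v m : (r ^ c = 1 %[mod v])%N ->
  exists2 S, (a ^+ i * b ^+ c) ^+ m = b ^+ (c * m) * a ^+ S & (S = i * m %[mod v])%N.
Proof.
move=> rc; have mul_rc x : (x * r ^ c = x %[mod v])%N.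
  by rewrite -modnMmr rc modnMmr muln1.
elim: m => [|m [S wmE Si]]; first by exists 0%N; rewrite ?muln0 ?expg0 ?mulg1.
exists (S * r ^ c + i * r ^ c)%N.
  rewrite expgSr wmE -mulgA [a ^+ S * _]mulgA -expgD expa_expb mulgA -expgD.
  by rewrite -mulnSr mulnDl.
by rewrite mulnSr -modnDm !mul_rc modnDm -modnDml Si modnDml.
Qed.

Lemma Hvic_mulE v i c : Hvic a b v i c :=: <[a ^+ v]> * <[a ^+ i * b ^+ c]>.
Proof.
rewrite -norm_joinEr; first by rewrite /Hvic /= joing_idl joing_idr.
by rewrite cycle_subG (subsetP (normal_norm (cycle_expa_normal v))) ?groupM ?groupX.
Qed.

Lemma mem_Hvic v i c x : (r ^ c = 1 %[mod v])%N -> x \in Hvic a b v i c ->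
  exists z m, exists2 S, x = a ^+ (v * z) * (b ^+ (c * m) * a ^+ S) &
                         (S = i * m %[mod v])%N.
Proof.
move=> rc; rewrite Hvic_mulE => /mulsgP[_ _ /cycleP[z ->] /cycleP[m ->] ->].
have [S wmE Si] := expg_expab i m rc.
by exists z, m, S; rewrite // -expgM wmE.
Qed.

Lemma conjg_expab_aV i c :
  (a ^+ i * b ^+ c) ^ a^-1 = (a ^+ i * b ^+ c) * (a ^+ (r ^ c) * (a ^+ 1)^-1).
Proof.
have /conjg_fixP aai : [~ a, a ^+ i] == 1 by rewrite commgXg.
have aw : a ^ (a ^+ i * b ^+ c) = a ^+ (r ^ c) by rewrite conjgM aai conjg_expb.
by rewrite conjgE invgK mulgA [a * _]conjgC aw expg1 -mulgA.
Qed.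

Lemma conjg_expab_b i c :
  (a ^+ i * b ^+ c) ^ b = (a ^+ (i * r) * (a ^+ i)^-1) * (a ^+ i * b ^+ c).
Proof. by rewrite conjMg !conjXg ab conjgE mulKg -expgM mulnC -mulgA mulKg. Qed.

Lemma Hvic_normal v i c : (v %| n)%N -> (r ^ c = 1 %[mod v])%N ->
  (i * r = i %[mod v])%N -> Hvic a b v i c <| G.
Proof.
move=> vn rc ir.
have avH : <[a ^+ v]> \subset Hvic a b v i c by rewrite cycle_subG Hvic_expa.
have avE x y : (a ^+ x * (a ^+ y)^-1 \in <[a ^+ v]>) = (x == y %[mod v]).
  by apply: (expa_mulV_mem x y vn) => j; apply: mem_cycle_expa.
apply: normal_gen2.
- by rewrite gen_subG subUset !sub1set groupM ?groupX.
- rewrite -groupV; apply: mem_norm_gen => _ /set2P[] ->.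
    have /conjg_fixP aaV : [~ a, a^-1] == 1 by rewrite commgVg.
    by rewrite conjXg aaV Hvic_expa.
  by rewrite conjg_expab_aV groupM ?Hvic_expab // (subsetP avH) // avE rc.
apply: mem_norm_gen => _ /set2P[] ->.
  by rewrite conjXg ab -expgM mulnC expgM (subsetP avH) ?mem_cycle.
by rewrite conjg_expab_b groupM ?Hvic_expab // (subsetP avH) // avE ir.
Qed.

Lemma dvdn_mord v c :
  0 < v -> (v %| n)%N -> (mord v r %| c)%N = (r ^ c == 1 %[mod v]).
Proof.
move=> v_gt0 vn; apply: mord_dvdn v_gt0 t_gt0 _.
by rewrite -(modn_dvdm _ vn) rt modn_dvdm.
Qed.

Lemma inN_Hvic_normal v i c : inN n t k r v i c -> Hvic a b v i c <| G.
Proof.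
move=> [[v_gt0 vn _ _ _] _]; rewrite dvdn_mord // dvdz_mul_subr1 => /eqP rc /eqP ir.
exact: Hvic_normal.
Qed.

Lemma HvicI_cycle v i c : inN n t k r v i c -> Hvic a b v i c :&: <[a]> = <[a ^+ v]>.
Proof.
move=> [[v_gt0 vn c_gt0 ct _] vk mc _]; move: mc; rewrite dvdn_mord // => /eqP rc.
apply/eqP; rewrite eqEsubset subsetI !cycle_subG Hvic_expa groupX ?cycle_id // !andbT.
apply/subsetP => _ /setIP[/(mem_Hvic rc)[z [m [S -> Si]]] xA].
have /dvdnP[q cmE] : (t %| c * m)%N.
  case/cycleP: xA => y; rewrite mulgA expa_expb -mulgA -expgD -[a ^+ y]mul1g -(expg0 b).
  by move/expb_mod; rewrite mod0n => /eqP.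
have mE : m = (t %/ c * q)%N.
  by apply/eqP; rewrite -(eqn_pmul2l c_gt0) cmE mulnA [(c * _)%N]mulnC divnK // mulnC.
rewrite cmE (mulnC q) (expgM b) bt -expgM -!expgD mem_cycle_expa // dvdn_addr ?dvdn_mulr //.
rewrite /dvdn -modnDmr Si modnDmr mE -/(dvdn _ _).
have -> : (k * q + i * (t %/ c * q) = q * (k + i * (t %/ c)))%N by ring.
exact: dvdn_mull.
Qed.

Lemma Hvic_expb_dvdn v i c i' c' :
  inN n t k r v i c -> a ^+ i' * b ^+ c' \in Hvic a b v i c -> (c %| c')%N.
Proof.
move=> [[v_gt0 vn _ ct _] _ mc _]; move: mc; rewrite dvdn_mord // => /eqP rc.
case/(mem_Hvic rc) => z [m [S]]; rewrite mulgA !expa_expb -!mulgA -!expgD.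
move=> /expb_mod c'E _.
by rewrite /dvdn -(modn_dvdm c' ct) c'E modn_dvdm // modnMr.
Qed.

Lemma Hvic_inj v i c v' i' c' : inN n t k r v i c -> inN n t k r v' i' c' ->
  Hvic a b v i c = Hvic a b v' i' c' -> (v, i, c) = (v', i', c').
Proof.
move=> N N' E.
have dvd_v v1 i1 c1 v2 i2 c2 : inN n t k r v1 i1 c1 -> inN n t k r v2 i2 c2 ->
    Hvic a b v1 i1 c1 = Hvic a b v2 i2 c2 -> (v1 %| v2)%N.
  move=> N1 N2 E12; have : a ^+ v2 \in <[a ^+ v1]>.
    by rewrite -(HvicI_cycle N1) E12 (HvicI_cycle N2) cycle_id.
  by case: N1 => [[_ v1n _ _ _] _ _ _]; rewrite mem_cycle_expa.
have vE : v = v'.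
  by apply/eqP; rewrite eqn_dvd (dvd_v _ _ _ _ _ _ N N' E) (dvd_v _ _ _ _ _ _ N' N (esym E)).
have cE : c = c'.
  apply/eqP; rewrite eqn_dvd (Hvic_expb_dvdn N (i' := i')) ?E ?Hvic_expab //.
  by rewrite (Hvic_expb_dvdn N' (i' := i)) -?E ?Hvic_expab.
subst v' c'; have [[_ vn _ _ iv] _ _ _] := N; have [[_ _ _ _ i'v] _ _ _] := N'.
have : a ^+ i' * (a ^+ i)^-1 \in <[a ^+ v]>.
  rewrite -(HvicI_cycle N); apply/setIP; split; last by rewrite groupM ?groupV ?mem_cycle.
  by rewrite -(mulgK (b ^+ c) (a ^+ i')) -mulgA -invMg groupM ?groupV ?Hvic_expab // E Hvic_expab.
rewrite (expa_mulV_mem _ _ vn) => [/eqP|j]; last exact: mem_cycle_expa.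
by rewrite !modn_small // => ->.
Qed.

Section NormalSubgroup.

Variables (H : {group gT}) (v i c : nat).
Hypotheses (nsHG : H <| G) (vn : (v %| n)%N) (ct : (c %| t)%N).
Hypothesis aH : forall j, (a ^+ j \in H) = (v %| j)%N.
Hypothesis bHa : forall j, (b ^+ j \in H <*> <[a]>) = (c %| j)%N.
Hypothesis wH : a ^+ i * b ^+ c \in H.

Let aHE x y : (a ^+ x * (a ^+ y)^-1 \in H) = (x == y %[mod v]).
Proof. exact: expa_mulV_mem. Qed.

Let conjH x y : y \in G -> (x ^ y \in H) = (x \in H).
Proof. by move=> yG; rewrite memJ_norm // (subsetP (normal_norm nsHG)). Qed.

Lemma normal_expr_mod : (r ^ c = 1 %[mod v])%N.
Proof.
apply/eqP; rewrite -aHE -[_ * _](mulKg (a ^+ i * b ^+ c)) -conjg_expab_aV.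
by rewrite groupM ?groupV // conjH ?groupV.
Qed.

Lemma normal_mulr_mod : (i * r = i %[mod v])%N.
Proof.
apply/eqP; rewrite -aHE -[_ * _](mulgK (a ^+ i * b ^+ c)) -conjg_expab_b.
by rewrite groupM ?groupV // conjH.
Qed.

Lemma normal_dvdn_k : (v %| k + i * (t %/ c))%N.
Proof.
have [S wE Si] := expg_expab i (t %/ c) normal_expr_mod.
have : (a ^+ i * b ^+ c) ^+ (t %/ c) \in H by rewrite groupX.
rewrite wE mulnC divnK // bt -expgD aH.
by rewrite /dvdn -modnDmr Si modnDmr mulnC.
Qed.

Lemma normal_Hvic : H = Hvic a b v i c.
Proof.
apply/val_inj/eqP; rewrite /= eqEsubset andbC gen_subG subUset !sub1set aH dvdnn wH /=.
apply/subsetP => x xH; have [j [z xE]] := mem_expb_expa (subsetP (normal_sub nsHG) _ xH).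
have /dvdnP[m jE] : (c %| j)%N.
  rewrite -bHa -(mulgK (a ^+ z) (b ^+ j)) -xE.
  by rewrite groupM ?groupV ?mem_gen // inE ?xH ?mem_cycle ?orbT.
have [S wE _] := expg_expab i m normal_expr_mod.
rewrite -(mulKVg ((a ^+ i * b ^+ c) ^+ m) x) groupM ?groupX ?Hvic_expab //.
have : ((a ^+ i * b ^+ c) ^+ m)^-1 * x \in H by rewrite groupM ?groupV ?groupX.
rewrite wE xE jE mulnC invMg -mulgA mulKg -expVgn invg_expg -expgM -expgD aH.
by case/dvdnP=> q ->; rewrite mulnC expgM groupX ?Hvic_expa.
Qed.

End NormalSubgroup.

Lemma normal_subgroup_Hvic (H : {group gT}) :
  H <| G -> exists v i c, inN n t k r v i c /\ H = Hvic a b v i c.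
Proof.
move=> nsHG; have anH : a ^+ n \in H by rewrite -order_a expg_order group1.
have btHa : b ^+ t \in H <*> <[a]> by rewrite bt mem_gen // inE mem_cycle orbT.
have [v [v_gt0 vn aH]] := mem_expg_dvdn n_gt0 anH.
have [c [c_gt0 ct bHa]] := mem_expg_dvdn t_gt0 btHa.
have [y wH] : exists y, a ^+ y * b ^+ c \in H.
  have : b ^+ c \in H * <[a]>.
    rewrite -norm_joinEr ?bHa //.
    exact: subset_trans (normal_sub cycle_normal) (normal_norm nsHG).
  case/mulsgP => h _ hH /cycleP[z ->] bcE.
  have : (a ^+ z)^-1 ^ (b ^+ c)^-1 \in <[a]>.
    rewrite memJ_norm ?groupV ?mem_cycle //.
    by rewrite (subsetP (normal_norm cycle_normal)) ?groupV ?groupX.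
  by case/cycleP=> y yE; exists y; rewrite -yE -conjgCV bcE mulgK.
have {}wH : a ^+ (y %% v) * b ^+ c \in H.
  rewrite -(groupMl _ (_ : a ^+ (y %/ v * v) \in H)) ?aH ?dvdn_mull //.
  by rewrite mulgA -expgD -divn_eq.
have N : inN n t k r v (y %% v) c.
  split; first by split; rewrite ?ltn_pmod.
  - exact: normal_dvdn_k nsHG vn ct aH wH.
  - by rewrite dvdn_mord // (normal_expr_mod nsHG vn aH wH).
  - by rewrite dvdz_mul_subr1 (normal_mulr_mod nsHG vn aH wH).
by exists v, (y %% v), c; split; last exact: normal_Hvic nsHG vn aH bHa wH.
Qed.

End MetacyclicGroup.

Theorem lemma1 (n t k r : nat) (gT : finGroupType) (G : {group gT}) (a b : gT) :
  0 < n -> 0 < t ->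
  (r ^ t = 1 %[mod n])%N ->
  ((n%:Z) %| ((k%:Z * (r%:Z - 1))%R))%Z ->
  metacyc_pres n t k r G a b ->
  [/\ (forall v i c, inN n t k r v i c -> Hvic a b v i c <| G),
      (forall H : {group gT}, H <| G ->
         exists v i c, inN n t k r v i c /\ H = Hvic a b v i c) &
      (forall v i c v' i' c', inN n t k r v i c -> inN n t k r v' i' c' ->
         Hvic a b v i c = Hvic a b v' i' c' -> (v, i, c) = (v', i', c'))].
Proof.
move=> n_gt0 t_gt0 rt; rewrite dvdz_mul_subr1 => /eqP kr presG.
have order_a := metacyc_pres_order n_gt0 t_gt0 rt kr presG.
have expb_mod := metacyc_pres_expb_mod n_gt0 t_gt0 rt kr presG.
case: presG => genG _ bt ab _.
split=> [v i c|H|v i c v' i' c']; [exact: inN_Hvic_normal | exact: normal_subgroup_Hvic | ].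
exact: Hvic_inj.
Qed.
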